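(* Let $A$ and $Z$ be $n\times n$ complex matrices with $0\le A\le I$ and $Z$ positive definite with largest eigenvalue $a$ and smallest eigenvalue $b$. Then $$AZA \le \frac{(a+b)^2}{4ab}\, Z.$$
   Context: $\le$ denotes the Loewner order on Hermitian matrices: $X\le Y$ means $Y-X$ is positive semidefinite. *)

From mathcomp Require Import all_boot all_order all_algebra.
Set Implicit Arguments.
Unset Strict Implicit.
Unset Printing Implicit Defensive.
Import Order.TTheory GRing.Theory Num.Theory Num.Def.
Local Open Scope ring_scope.
Local Open Scope sesquilinear_scope.

(* Scalar field: an arbitrary numeric algebraically closed field C
   (e.g. the complex numbers); the order on C is the partial order in
   which 0 <= z iff z is a nonnegative real. *)

Definition qform {C : numClosedFieldType} {n : nat} (M : 'M[C]_n) (v : 'rV[C]_n) : C :=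
  (v *m M *m v ^t conjC) 0 0.

Definition psdmx {C : numClosedFieldType} {n : nat} (M : 'M[C]_n) : Prop :=
  M \is hermsymmx /\ forall v : 'rV[C]_n, 0 <= qform M v.

Definition pdmx {C : numClosedFieldType} {n : nat} (M : 'M[C]_n) : Prop :=
  M \is hermsymmx /\ forall v : 'rV[C]_n, v != 0 -> 0 < qform M v.

Definition loewner_le {C : numClosedFieldType} {n : nat} (X Y : 'M[C]_n) : Prop :=
  psdmx (Y - X).

Definition largest_eigenvalue {C : numClosedFieldType} {n : nat} (M : 'M[C]_n) (a : C) : Prop :=
  eigenvalue M a /\ forall c, eigenvalue M c -> c <= a.

Definition smallest_eigenvalue {C : numClosedFieldType} {n : nat} (M : 'M[C]_n) (b : C) : Prop :=
  eigenvalue M b /\ forall c, eigenvalue M c -> b <= c.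

From mathcomp Require Import all_boot all_order all_algebra.
From mathcomp Require Import ring.
Import Order.TTheory GRing.Theory Num.Theory.
Local Open Scope ring_scope.
Local Open Scope sesquilinear_scope.
Set Implicit Arguments.
Unset Strict Implicit.

(* With c = (a+b)^2/(4ab) and K = (a+b) Z - 2ab A one has the identity
     c Z - A Z A = (4ab)^-1 K Z^-1 K + (a+b) (A - A^2) + A ((a+b) - Z - ab Z^-1) A,
   whose three terms are congruences of positive semidefinite matrices:
   A - A^2 = (1-A) A (1-A) + A (1-A) A, and (a+b) - Z - ab Z^-1 is, in an
   eigenbasis of Z, diagonal with entries (a-z)(z-b)/z >= 0. *)

Lemma kantorovich_decomposition (F : fieldType) n (Z Zi A : 'M[F]_n) (a b : F) :
  4 * a * b != 0 -> Z *m Zi = 1%:M -> Zi *m Z = 1%:M ->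
  ((a + b) ^+ 2 / (4 * a * b)) *: Z - A *m Z *m A =
    (4 * a * b)^-1 *: (((a + b) *: Z - (2 * a * b) *: A) *m Zi
                       *m ((a + b) *: Z - (2 * a * b) *: A))
    + (a + b) *: (A - A *m A) + A *m ((a + b)%:M - (Z + (a * b) *: Zi)) *m A.
Proof.
move=> ab_neq0 ZZi ZiZ.
rewrite !(mulmxBl, mulmxBr, mulmxDl, mulmxDr, mulNmx, opprD) -!(scalemxAl, scalemxAr).
rewrite !ZZi !mul1mx -(mulmxA A Zi Z) ZiZ mulmx1 mul_mx_scalar -scalemxAl.
(* The remaining products of matrices occur linearly: compare entrywise. *)
move: (A *m Z *m A) (A *m Zi *m A) (A *m A) => AZA AZiA AA.
apply/matrixP => i j; rewrite !mxE; field.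
by move: ab_neq0; rewrite !mulf_eq0 !negb_or => /andP[/andP[-> ->] ->].
Qed.

Section PsdMatrices.
Variables (C : numClosedFieldType) (n : nat).
Implicit Types (M N B : 'M[C]_n) (v d : 'rV[C]_n).

Lemma hermsymmxP M : reflect (M^t* = M) (M \is hermsymmx).
Proof.
by apply: (iffP (is_hermitianmxP _ _ _)); rewrite expr0 scale1r => /esym.
Qed.

Lemma hermsymmxD M N : M \is hermsymmx -> N \is hermsymmx -> M + N \is hermsymmx.
Proof.
move=> /hermsymmxP hM /hermsymmxP hN; apply/hermsymmxP.
by rewrite linearD map_mxD /= hM hN.
Qed.

Lemma hermsymmxZ c M : c \is Num.real -> M \is hermsymmx -> c *: M \is hermsymmx.
Proof.
move=> c_real /hermsymmxP hM; apply/hermsymmxP.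
by rewrite linearZ /= map_mxZ hM; congr (_ *: _); exact: conj_Creal.
Qed.

Lemma qformD M N v : qform (M + N) v = qform M v + qform N v.
Proof. by rewrite /qform mulmxDr mulmxDl mxE. Qed.

Lemma qformZ c M v : qform (c *: M) v = c * qform M v.
Proof. by rewrite /qform -scalemxAr -scalemxAl mxE. Qed.

Lemma qform_congr B M v : qform (B^t* *m M *m B) v = qform M (v *m B^t*).
Proof. by rewrite /qform trmx_mul map_mxM trmxCK !mulmxA. Qed.

Lemma qform_diag d v : qform (diag_mx d) v = \sum_j d 0 j * (v 0 j * (v 0 j)^*).
Proof.
rewrite /qform mul_mx_diag mxE; apply: eq_bigr => j _.
by rewrite !mxE mulrCA mulrA.
Qed.

Lemma psdmxD M N : psdmx M -> psdmx N -> psdmx (M + N).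
Proof.
move=> [hM M_ge0] [hN N_ge0]; split; first exact: hermsymmxD.
by move=> v; rewrite qformD addr_ge0.
Qed.

Lemma psdmxZ c M : 0 <= c -> psdmx M -> psdmx (c *: M).
Proof.
move=> c_ge0 [hM M_ge0]; split; first exact: hermsymmxZ (ger0_real c_ge0) hM.
by move=> v; rewrite qformZ mulr_ge0.
Qed.

Lemma psdmx_congr B M : psdmx M -> psdmx (B^t* *m M *m B).
Proof.
move=> [/hermsymmxP hM M_ge0]; split; last by move=> v; rewrite qform_congr.
by apply/hermsymmxP; rewrite !trmx_mul !map_mxM trmxCK hM mulmxA.
Qed.

Lemma psdmx_herm_congr B M : B \is hermsymmx -> psdmx M -> psdmx (B *m M *m B).
Proof. by move=> /hermsymmxP hB /(psdmx_congr B); rewrite hB. Qed.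

Lemma psdmx_diag d : (forall j, 0 <= d 0 j) -> psdmx (diag_mx d).
Proof.
move=> d_ge0; split.
  apply/hermsymmxP; rewrite tr_diag_mx map_diag_mx; congr diag_mx.
  by apply/rowP => j; rewrite !mxE; exact/conj_Creal/ger0_real.
move=> v; rewrite qform_diag sumr_ge0 // => j _.
by rewrite mulr_ge0 ?mul_conjC_ge0.
Qed.

Lemma loewner_sqr_le M : loewner_le 0 M -> loewner_le M 1%:M -> loewner_le (M *m M) M.
Proof.
rewrite /loewner_le subr0 => M_psd IM_psd.
have hM : M \is hermsymmx by case: M_psd.
have hIM : 1%:M - M \is hermsymmx by case: IM_psd.
have -> : M - M *m M = (1%:M - M) *m M *m (1%:M - M) + M *m (1%:M - M) *m M.
  by rewrite !(mulmxBl, mulmxBr, mul1mx, mulmx1) subrK.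
by apply: psdmxD; apply: psdmx_herm_congr.
Qed.

Lemma pdmx_eigenvalue_gt0 M c : pdmx M -> eigenvalue M c -> 0 < c.
Proof.
move=> [_ M_gt0] /eigenvalueP[v vM v_neq0].
have := M_gt0 v v_neq0; rewrite /qform vM -scalemxAl mxE.
have vv_gt0 : 0 < (v *m v^t*) 0 0 by rewrite -dotmxE dnorm_gt0.
by rewrite pmulr_lgt0.
Qed.

End PsdMatrices.

Section UnitaryDiagonal.
Variables (C : numClosedFieldType) (n : nat) (P : 'M[C]_n).
Hypothesis P_unitary : P \is unitarymx.
Implicit Types (f g : 'rV[C]_n).

Lemma unitary_congr_scalar (c : C) : P^t* *m c%:M *m P = c%:M.
Proof.
by rewrite mul_mx_scalar -scalemxAl (mulmx1C (unitarymxP P_unitary)) scalemx1.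
Qed.

Lemma mulmx_unitary_diag_eq1 f g : (forall j, f 0 j * g 0 j = 1) ->
  (P^t* *m diag_mx f *m P) *m (P^t* *m diag_mx g *m P) = 1%:M.
Proof.
move=> fg1; rewrite !mulmxA mulmxtVK // -(mulmxA (P^t*)) mulmx_diag.
rewrite -[RHS]unitary_congr_scalar -diag_const_mx.
by congr (_ *m diag_mx _ *m _); apply/rowP => j; rewrite !mxE fg1.
Qed.

Lemma eigenvalue_unitary_diag f j : eigenvalue (P^t* *m diag_mx f *m P) (f 0 j).
Proof.
have PP : P *m P^t* = 1%:M by apply/unitarymxP.
apply/eigenvalueP; exists (row j P).
  by rewrite !mulmxA -row_mul PP -row_mul mul1mx row_diag_mx -scalemxAl -rowE.
apply/negP => /eqP Pj0.
have : row j (P *m P^t*) = 0 by rewrite row_mul Pj0 mul0mx.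
by rewrite PP row1 => /rowP /(_ j); rewrite !mxE !eqxx /= => /eqP; rewrite oner_eq0.
Qed.

Lemma loewner_unitary_diag_add_inv (a b : C) (d : 'rV[C]_n) :
  0 < b -> (forall j, b <= d 0 j <= a) ->
  loewner_le (P^t* *m diag_mx d *m P
              + (a * b) *: (P^t* *m diag_mx (\row_j (d 0 j)^-1) *m P)) (a + b)%:M.
Proof.
move=> b_gt0 d_ab; rewrite /loewner_le.
have -> : (a + b)%:M - (P^t* *m diag_mx d *m P
                        + (a * b) *: (P^t* *m diag_mx (\row_j (d 0 j)^-1) *m P)) =
    P^t* *m diag_mx (const_mx (a + b) - (d + (a * b) *: \row_j (d 0 j)^-1)) *m P.
  rewrite (raddfB (@diag_mx _ n)) (raddfD (@diag_mx _ n)) /= [in RHS]linearZ /=.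
  rewrite diag_const_mx !(mulmxBl, mulmxBr, mulmxDl, mulmxDr).
  by rewrite -scalemxAr -scalemxAl unitary_congr_scalar.
apply/psdmx_congr/psdmx_diag => j; rewrite !mxE.
case/andP: (d_ab j) => b_le_dj dj_le_a.
have dj_gt0 : 0 < d 0 j := lt_le_trans b_gt0 b_le_dj.
have -> : a + b - (d 0 j + a * b * (d 0 j)^-1) = (a - d 0 j) * (d 0 j - b) / d 0 j.
  by field; rewrite gt_eqF.
by rewrite divr_ge0 ?mulr_ge0 ?subr_ge0 // ltW.
Qed.

End UnitaryDiagonal.

Lemma hermsymmx_spectral (C : numClosedFieldType) n (M : 'M[C]_n) :
  M \is hermsymmx ->
  exists P (d : 'rV[C]_n), P \is unitarymx /\ M = P^t* *m diag_mx d *m P.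
Proof.
move=> /hermitian_normalmx /orthomx_spectralP M_def.
exists (spectralmx M), (spectral_diag M); split; first exact: spectral_unitarymx.
by rewrite {1}M_def invmx_unitary // spectral_unitarymx.
Qed.

Lemma loewner_sandwich_le (C : numClosedFieldType) n (Z Zi A : 'M[C]_n) (a b : C) :
  0 < a -> 0 < b -> Z *m Zi = 1%:M -> Zi *m Z = 1%:M ->
  Z \is hermsymmx -> psdmx Zi -> loewner_le (Z + (a * b) *: Zi) (a + b)%:M ->
  loewner_le 0 A -> loewner_le A 1%:M ->
  loewner_le (A *m Z *m A) (((a + b) ^+ 2 / (4 * a * b)) *: Z).
Proof.
move=> a_gt0 b_gt0 ZZi ZiZ Z_herm Zi_psd Z_le A_ge0 A_le1.
have A_herm : A \is hermsymmx by case: A_ge0; rewrite subr0.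
have K_herm : (a + b) *: Z - (2 * a * b) *: A \is hermsymmx.
  rewrite -scaleNr; apply: hermsymmxD; apply: hermsymmxZ; rewrite ?rpredN //.
  - by rewrite ger0_real // addr_ge0 ?ltW.
  - by rewrite ger0_real // !mulr_ge0 ?ler0n ?ltW.
rewrite /loewner_le (kantorovich_decomposition A _ ZZi ZiZ); last first.
  by rewrite !mulf_neq0 ?gt_eqF ?ltr0n.
apply: psdmxD; first apply: psdmxD.
- by apply: psdmxZ (psdmx_herm_congr K_herm Zi_psd); rewrite invr_ge0 !mulr_ge0 ?ltW.
- by apply: psdmxZ (loewner_sqr_le A_ge0 A_le1); rewrite addr_ge0 ?ltW.
- exact: psdmx_herm_congr.
Qed.

Theorem corollary1p5 (C : numClosedFieldType) (n : nat) (A Z : 'M[C]_n) (a b : C) :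
  loewner_le 0 A -> loewner_le A 1%:M ->
  pdmx Z -> largest_eigenvalue Z a -> smallest_eigenvalue Z b ->
  loewner_le (A *m Z *m A) (((a + b) ^+ 2 / (4 * a * b)) *: Z).
Proof.
move=> A_ge0 A_le1 Z_pd [eig_a a_max] [eig_b b_min].
have b_gt0 : 0 < b := pdmx_eigenvalue_gt0 Z_pd eig_b.
have a_gt0 : 0 < a := lt_le_trans b_gt0 (a_max _ eig_b).
have [P [d [P_unitary Z_def]]] := hermsymmx_spectral (proj1 Z_pd).
have d_ab j : b <= d 0 j <= a.
  have eig_dj : eigenvalue Z (d 0 j) by rewrite Z_def eigenvalue_unitary_diag.
  by rewrite b_min ?a_max.
have d_gt0 j : 0 < d 0 j by case/andP: (d_ab j) => /(lt_le_trans b_gt0).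
pose Zi := P^t* *m diag_mx (\row_j (d 0 j)^-1) *m P.
apply: (loewner_sandwich_le (Zi := Zi)) => //.
- by rewrite Z_def mulmx_unitary_diag_eq1 // => j; rewrite mxE mulfV ?gt_eqF.
- by rewrite Z_def mulmx_unitary_diag_eq1 // => j; rewrite mxE mulVf ?gt_eqF.
- exact: proj1 Z_pd.
- by apply/psdmx_congr/psdmx_diag => j; rewrite mxE invr_ge0 ltW.
- by rewrite Z_def; apply: loewner_unitary_diag_add_inv.
Qed.
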